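(* Let $n\ge 2$ and let $\dot{\mathbf x}=\mathbf f(\sigma,\mathbf x)$ be a multistable regulatory system (MSRS) as defined in the context, with $f_k(\sigma,\mathbf x)=-l(x_k)+\sigma\frac{g(x_k)}{P(x_1,\dots,x_n)+h(x_k)}$; fix $\sigma>0$ and let $\mathbf r\in\mathbb R_{>0}^n$ be an equilibrium. For $k=1,\dots,n$ let $D_k(\mathbf x)=-\frac{P(\mathbf x)+h(x_k)}{l(x_k)}$. (1) If $\mathbf r=(q,\dots,q)$ is diagonal, set $\tau=\frac{\partial f_n}{\partial x_n}(\mathbf r)$, $\xi=\frac{\partial P}{\partial x_{n-1}}(\mathbf r)/D_n(\mathbf r)$, $G_1=\tau-\xi$, $G_2=\tau+(n-1)\xi$. Then $\mathbf r$ is stable if and only if $G_1<0$ and $G_2<0$. (2),(3) Otherwise, suppose the coordinates of $\mathbf r$ take the value $p$ exactly $i$ times and the value $q\neq p$ exactly $n-i$ times with $1\le i\le\lfloor n/2\rfloor$. Let $\boldsymbol\rho=(p,\dots,p,q,\dots,q)$ ($p$ in the first $i$ coordinates), and set $\beta=\frac{\partial f_1}{\partial x_1}(\boldsymbol\rho)$, $\tau=\frac{\partial f_n}{\partial x_n}(\boldsymbol\rho)$, $\gamma=\frac{\partial P}{\partial x_2}(\boldsymbol\rho)/D_1(\boldsymbol\rho)$, $\xi=\frac{\partial P}{\partial x_{n-1}}(\boldsymbol\rho)/D_n(\boldsymbol\rho)$, $\mu=\frac{\partial P}{\partial x_n}(\boldsymbol\rho)/D_1(\boldsymbol\rho)$,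 $\nu=\frac{\partial P}{\partial x_1}(\boldsymbol\rho)/D_n(\boldsymbol\rho)$, $G_1=\tau-\xi$, $G_2=\beta-\gamma$, $G_3=\beta+\tau+(i-1)\gamma+(n-i-1)\xi$, $G_4=(\beta+(i-1)\gamma)(\tau+(n-i-1)\xi)-i(n-i)\mu\nu$. Then: (2a) if $i=1$ and $n=2$, $\mathbf r$ is stable if and only if $G_3<0$ and $G_4>0$; (2b) if $i=1$ and $n>2$, $\mathbf r$ is stable if and only if $G_1<0$, $G_3<0$ and $G_4>0$; (3) if $2\le i\le\lfloor n/2\rfloor$, $\mathbf r$ is stable if and only if $G_1<0$, $G_2<0$, $G_3<0$ and $G_4>0$.
   Context: A system of ODEs $\frac{dx_k}{dt}=f_k(\sigma,x_1,\dots,x_n)$, $k=1,\dots,n$, is called a multistable regulatory system (MSRS) if $f_k(\sigma,x_1,\dots,x_n)=-l(x_k)+\sigma\frac{g(x_k)}{P(x_1,\dots,x_n)+h(x_k)}$, where $l,g,h$ are real functions of one real variable and $P$ is a real function of $n$ real variables (all differentiable), and: (1) $\sigma$ is a positive parameter; (2) $P$ is symmetric, i.e. unchanged under interchanging any two of its arguments; (3) for every $k$ and every $(x_1,\dots,x_n)\in\mathbb R_{>0}^n$, $P(x_1,\dots,x_n)+h(x_k)>0$; (4) $l(z)\neq 0$ and for every $\sigma>0$ the function $z\mapsto \sigma\frac{g(z)}{l(z)}-h(z)$ has at most one extreme point for $z\in\mathbb R_{>0}$. For a given $\sigma$, a point $\mathbf r\in\mathbb R_{>0}^n$ is an equilibrium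 if $f_1(\sigma,\mathbf r)=\dots=f_n(\sigma,\mathbf r)=0$. An equilibrium $\mathbf r$ is stable (locally asymptotically stable) if all eigenvalues of the Jacobian matrix $J_{\mathbf f}(\mathbf r)=\left[\frac{\partial f_i}{\partial x_j}(\mathbf r)\right]_{i,j=1}^n$ have strictly negative real parts. An equilibrium is diagonal if all its coordinates are equal. *)

From HB Require Import structures.
From mathcomp Require Import all_boot all_order all_algebra.
From mathcomp Require Import all_classical all_reals all_analysis.
From mathcomp Require Import complex.
From mathcomp Require Import perm.
Set Implicit Arguments. Unset Strict Implicit. Unset Printing Implicit Defensive.
Import Order.TTheory GRing.Theory Num.Theory.
Import numFieldNormedType.Exports.
Local Open Scope ring_scope.

Definition pdiff (R : realType) (n : nat) (F : 'rV[R]_n -> R) (j : 'I_n)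
  (x : 'rV[R]_n) : R := 'D_(delta_mx 0 j) F x.

Definition msrs_f (R : realType) (n : nat) (l g h : R -> R)
  (P : 'rV[R]_n -> R) (sigma : R) (k : 'I_n) (x : 'rV[R]_n) : R :=
  - l (x ord0 k) + sigma * (g (x ord0 k) / (P x + h (x ord0 k))).

Definition msrs_D (R : realType) (n : nat) (l h : R -> R)
  (P : 'rV[R]_n -> R) (k : 'I_n) (x : 'rV[R]_n) : R :=
  - (P x + h (x ord0 k)) / l (x ord0 k).

Definition jacobian (R : realType) (n : nat) (F : 'I_n -> 'rV[R]_n -> R)
  (x : 'rV[R]_n) : 'M[R]_n :=
  \matrix_(i, j) pdiff (F i) j x.

(* locally asymptotically stable: all (complex) eigenvalues of the Jacobian
   have strictly negative real part *)
Definition stable_eq (R : realType) (n : nat) (F : 'I_n -> 'rV[R]_n -> R)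
  (x : 'rV[R]_n) : Prop :=
  forall z : R[i], eigenvalue (map_mx (fun a : R => (a%:C)%C) (jacobian F x)) z ->
    complex.Re z < 0.

Definition positive_vec (R : realType) (n : nat) (x : 'rV[R]_n) : Prop :=
  forall k, 0 < x ord0 k.

Definition equilibrium (R : realType) (n : nat) (F : 'I_n -> 'rV[R]_n -> R)
  (x : 'rV[R]_n) : Prop :=
  positive_vec x /\ forall k, F k x = 0.

Definition extreme_point (R : realType) (phi : R -> R) (z : R) : Prop :=
  0 < z /\
  exists e : R, 0 < e /\
    ((forall y, 0 < y -> `|y - z| < e -> phi y <= phi z) \/
     (forall y, 0 < y -> `|y - z| < e -> phi z <= phi y)).

Definition is_MSRS (R : realType) (n : nat) (l g h : R -> R)
  (P : 'rV[R]_n -> R) : Prop :=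
  [/\ (forall z, differentiable l z) /\ (forall z, differentiable g z) /\
        (forall z, differentiable h z) /\ (forall x, differentiable P x),
      (forall (i j : 'I_n) (x : 'rV[R]_n),
          P (\row_k x ord0 (tperm i j k)) = P x),
      (forall (k : 'I_n) (x : 'rV[R]_n), positive_vec x -> 0 < P x + h (x ord0 k)),
      (forall z : R, 0 < z -> l z != 0) &
      (forall sigma : R, 0 < sigma ->
         forall z1 z2 : R,
           extreme_point (fun z => sigma * (g z / l z) - h z) z1 ->
           extreme_point (fun z => sigma * (g z / l z) - h z) z2 -> z1 = z2)].

From Pilot Require Import Defs.
From HB Require Import structures.
From mathcomp Require Import all_boot all_order all_algebra.
From mathcomp Require Import all_classical all_reals all_analysis.
From mathcomp Require Import complex.
From mathcomp Require Import perm.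
From mathcomp Require Import ring lra zify.
Set Implicit Arguments. Unset Strict Implicit. Unset Printing Implicit Defensive.
Import Order.TTheory GRing.Theory Num.Theory.
Import numFieldNormedType.Exports.
Local Open Scope ring_scope.

(* Since P is symmetric, permuting the coordinates of the equilibrium permutes
   the rows and columns of the Jacobian simultaneously.  When the coordinates
   take the value p on a class of i indices and q on the complementary class,
   the Jacobian is therefore, up to such a permutation, a matrix whose diagonal
   entries depend only on the class of the index and whose off-diagonal entries
   depend only on the classes of row and column; at an equilibrium the latter
   are (dP/dx_j) / D_k.  Such a matrix has the eigenvalue d_b - o_bb for every
   class b with at least two elements (eigenvectors e_a - e_a' inside the
   class); its other eigenvalues are those of its action on class-constant
   vectors, the roots of a monic real quadratic.  Stability is thus equivalent
   to the sign conditions on the d_b - o_bb together with the Routh-Hurwitz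
   conditions (negative trace, positive determinant) for the quadratic.  The
   diagonal equilibrium is the special case of the classes {1} and {2,...,n}. *)

Section TwoClassMatrix.
Variables (K : fieldType) (n : nat) (c : 'I_n -> bool).
Variables (d : bool -> K) (o : bool -> bool -> K) (A : 'M[K]_n).
Hypothesis A_def : forall k j, A k j = if k == j then d (c k) else o (c k) (c j).

Definition class_sum (v : 'rV[K]_n) b := \sum_(k | c k == b) v ord0 k.
Definition class_size b : K := #|[set k | c k == b]|%:R.
Definition class_rowsum b := d b - o b b + class_size b * o b b.
(* On vectors equal to a on class true and to b on class false, A acts as the
   2x2 matrix [[M_true, |F| o_ft], [|T| o_tf, M_false]] with M_b the class row
   sums; this is its characteristic polynomial. *)
Definition two_class_charpoly z :=
  (z - class_rowsum true) * (z - class_rowsum false)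
  - class_size true * class_size false * o false true * o true false.

Lemma sum_class_const (f : 'I_n -> K) a b :
  (forall k, c k = b -> f k = a) -> \sum_(k | c k == b) f k = class_size b * a.
Proof.
move=> fE; rewrite (eq_bigr (fun _ => a)) => [|k /eqP]; last exact: fE.
by rewrite (eq_bigl [in [set k | c k == b]]) ?sumr_const ?mulr_natl // => k; rewrite inE.
Qed.

Lemma mulmx_two_class (v : 'rV[K]_n) j :
  (v *m A) ord0 j = v ord0 j * (d (c j) - o (c j) (c j))
    + class_sum v true * o true (c j) + class_sum v false * o false (c j).
Proof.
rewrite mxE (eq_bigr (fun k => v ord0 k * o (c k) (c j)
    + (if k == j then v ord0 j * (d (c j) - o (c j) (c j)) else 0))); last first.
  by move=> k _; rewrite A_def; case: eqP => [->|_]; [ring | rewrite addr0].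
rewrite big_split /= -big_mkcond big_pred1_eq addrC -addrA; congr (_ + _).
rewrite (bigID c) /= /class_sum !big_distrl /=.
by congr (_ + _); apply: eq_big => k; case: (c k).
Qed.

Lemma class_sum_eigen (v : 'rV[K]_n) z b : v *m A = z *: v ->
  z * class_sum v b = class_sum v b * (d b - o b b)
    + class_size b * (class_sum v true * o true b + class_sum v false * o false b).
Proof.
move=> vA; set W := class_sum v true * _ + _.
rewrite /class_sum big_distrr /= (eq_bigr (fun k => v ord0 k * (d b - o b b) + W)).
  by rewrite big_split /= -big_distrl (@sum_class_const (fun=> W) W).
by move=> k /eqP ck; rewrite /W -ck addrA -mulmx_two_class vA mxE.
Qed.

Lemma charpoly_mul_class_sum (v : 'rV[K]_n) z b : v *m A = z *: v ->
  two_class_charpoly z * class_sum v b = 0.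
Proof.
move=> vA; have eT := class_sum_eigen true vA; have eF := class_sum_eigen false vA.
set ST := class_sum v true in eT eF *; set SF := class_sum v false in eT eF *.
have -> : two_class_charpoly z * class_sum v b =
  (if b then z - class_rowsum false else class_size false * o true false)
    * (z * ST - (ST * (d true - o true true)
                 + class_size true * (ST * o true true + SF * o false true)))
  + (if b then class_size true * o false true else z - class_rowsum true)
    * (z * SF - (SF * (d false - o false false)
                 + class_size false * (ST * o true false + SF * o false false))).
  by case: b; rewrite /two_class_charpoly /class_rowsum /ST /SF; ring.
by rewrite -eT -eF !subrr !mulr0 addr0.
Qed.

Lemma eigenvalue_two_class z : eigenvalue A z ->
  (exists2 b, (1 < #|[set k | c k == b]|)%N & z = d b - o b b)
  \/ two_class_charpoly z = 0.
Proof.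
case/eigenvalueP => v vA v0.
have [/andP [/eqP ST0 /eqP SF0]|] := boolP ((class_sum v true == 0) && (class_sum v false == 0)).
  left; have [j vj] : exists j, v ord0 j != 0.
    apply/existsP; apply: contraR v0 => /existsPn v0; apply/eqP/rowP => j.
    by have := v0 j; rewrite negbK mxE => /eqP.
  have ez : z = d (c j) - o (c j) (c j).
    have := mulmx_two_class v j; rewrite vA ST0 SF0 !mul0r !addr0 mxE mulrC.
    exact: mulfI.
  exists (c j) => //; rewrite ltnNge; apply: contra vj => /card_le1_eqP single.
  rewrite -[v ord0 j](_ : class_sum v (c j) = _); first by case: (c j); rewrite ?ST0 ?SF0.
  rewrite /class_sum (bigD1 j) //= big1 ?addr0 // => k /andP [ck /eqP []].
  by apply: single; rewrite inE.
rewrite negb_and => nz; right.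
have [b /negPf Sb] : exists b, class_sum v b != 0.
  by case/orP: nz => nz; [exists true | exists false].
by apply/eqP; have /eqP := charpoly_mul_class_sum b vA; rewrite mulf_eq0 Sb orbF.
Qed.

Lemma eigenvalue_within_class b :
  (1 < #|[set k | c k == b]|)%N -> eigenvalue A (d b - o b b).
Proof.
case/card_gt1P => a [a' []]; rewrite !inE => /eqP ca /eqP ca' aa'.
apply/eigenvalueP; exists (delta_mx 0 a - delta_mx 0 a').
  rewrite mulmxBl -!rowE; apply/rowP => j.
  rewrite !mxE !A_def ca ca' eqxx /= ![_ == j]eq_sym.
  have [->|ja] := eqVneq j a; first by rewrite (negPf aa') ca /=; ring.
  by have [->|ja'] := eqVneq j a'; rewrite ?ca' /=; ring.
apply/eqP => /rowP /(_ a) /eqP.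
by rewrite !mxE !eqxx (negPf aa') /= subr0 oner_eq0.
Qed.

Lemma class_const_eigenvector z al be :
  al * (z - class_rowsum true) = class_size false * o false true * be ->
  be * (z - class_rowsum false) = class_size true * o true false * al ->
  (\row_k if c k then al else be) *m A = z *: \row_k if c k then al else be.
Proof.
move=> eT eF; set v := \row_k _.
have Sv b : class_sum v b = class_size b * (if b then al else be).
  by apply: sum_class_const => k ck; rewrite /v mxE ck.
apply/rowP => j; rewrite mulmx_two_class !Sv !mxE /class_rowsum in eT eF *.
apply/eqP; rewrite -subr_eq0; apply/eqP; case: (c j).
  by rewrite -[RHS](subrr (class_size false * o false true * be)) -{2}eT; ring.
by rewrite -[RHS](subrr (class_size true * o true false * al)) -{2}eF; ring.
Qed.

Lemma charpoly_root_eigenvalue z :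
  (0 < #|[set k | c k == true]|)%N -> (0 < #|[set k | c k == false]|)%N ->
  two_class_charpoly z = 0 -> eigenvalue A z.
Proof.
move=> neT neF cp0.
have aa' : (z - class_rowsum true) * (z - class_rowsum false)
    = (class_size false * o false true) * (class_size true * o true false).
  by apply/eqP; rewrite -subr_eq0 -cp0 /two_class_charpoly; apply/eqP; ring.
set a := z - class_rowsum true in aa' *; set a' := z - class_rowsum false in aa' *.
set X := class_size false * _ in aa' *; set Y := class_size true * _ in aa' *.
suff [al [be [eT eF nz]]] : exists al be,
    [/\ al * a = X * be, be * a' = Y * al & (al != 0) || (be != 0)].
  apply/eigenvalueP; exists (\row_k if c k then al else be).
    exact: class_const_eigenvector.
  case/orP: nz => nz; [case/card_gt0P: neT | case/card_gt0P: neF] => k;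
    rewrite inE => /eqP ck; apply: contra nz => /eqP/rowP/(_ k);
    by rewrite !mxE ck => ->.
(* (al, be) is a nonzero kernel vector of the singular matrix [[a, -X], [-Y, a']]. *)
have [/andP [/eqP a0 /eqP X0]|aX] := boolP ((a == 0) && (X == 0)); last first.
  by exists X, a; split; rewrite // ?aa' 1?mulrC // orbC -negb_and.
have [/andP [/eqP a'0 /eqP Y0]|a'Y] := boolP ((a' == 0) && (Y == 0)).
  by exists 1, 0; split; rewrite ?a0 ?X0 ?Y0 ?mul1r ?mulr0 ?mul0r ?oner_eq0.
by exists a'; exists Y; split; rewrite ?a0 ?X0 ?mulr0 ?mul0r // -negb_and.
Qed.

End TwoClassMatrix.

Section QuadraticHurwitz.
Variable R : rcfType.
Local Open Scope complex_scope.

Lemma quadratic_Hurwitz (T D : R) :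
  (forall z : R[i], z * z - T%:C * z + D%:C = 0 -> complex.Re z < 0)
  <-> T < 0 /\ 0 < D.
Proof.
split=> [stable|[T0 D0] [a b] /eqP]; last first.
  rewrite eq_complex /= => /andP [/eqP e1 /eqP e2].
  have [b0|bn0] := eqVneq b 0; first by move: e1; rewrite b0; nra.
  have /eqP : b * (2 * a - T) = 0 by rewrite -e2; ring.
  by rewrite mulf_eq0 (negPf bn0) subr_eq0 => /eqP; lra.
have [De_ge0|De_lt0] := leP 0 (T * T - 4 * D).
  pose s := Num.sqrt (T * T - 4 * D).
  have s2 : s * s = T * T - 4 * D by rewrite -expr2 sqr_sqrtr.
  have s0 : 0 <= s := sqrtr_ge0 _.
  have /stable /= : ((T + s) / 2)%:C * ((T + s) / 2)%:C - T%:C * ((T + s) / 2)%:C + D%:C = 0.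
    by apply/eqP; rewrite eq_complex /= !mulr0 !mul0r; apply/andP; split; apply/eqP; nra.
  by move=> neg; split; nra.
pose s := Num.sqrt (- (T * T - 4 * D)).
have s2 : s * s = - (T * T - 4 * D) by rewrite -expr2 sqr_sqrtr // oppr_ge0 ltW.
have /stable /= : ((T / 2) +i* (s / 2)) * ((T / 2) +i* (s / 2))
    - T%:C * ((T / 2) +i* (s / 2)) + D%:C = 0.
  by apply/eqP; rewrite eq_complex /= !mul0r; apply/andP; split; apply/eqP; nra.
by move=> neg; split; nra.
Qed.
End QuadraticHurwitz.

Section TwoClassStability.
Variables (R : rcfType) (n : nat) (c : 'I_n -> bool).
Variables (d : bool -> R) (o : bool -> bool -> R) (A : 'M[R]_n).
Hypothesis A_def : forall k j, A k j = if k == j then d (c k) else o (c k) (c j).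
Local Notation Ac := (map_mx (real_complex R) A).
Local Notation dc := (fun b => (d b)%:C%C).
Local Notation oc := (fun b b' => (o b b')%:C%C).

Lemma map_two_class k j : Ac k j = if k == j then dc (c k) else oc (c k) (c j).
Proof. by rewrite mxE A_def; case: eqP. Qed.

Lemma two_class_charpoly_real z :
  two_class_charpoly c dc oc z = z * z
    - (class_rowsum c d o true + class_rowsum c d o false)%:C%C * z
    + (class_rowsum c d o true * class_rowsum c d o false
       - class_size R c true * class_size R c false * o false true * o true false)%:C%C.
Proof.
rewrite /two_class_charpoly /class_rowsum /class_size.
by rewrite !(rmorphB, rmorphD, rmorphM, rmorph_nat); ring.
Qed.

Lemma two_class_stable :
  (0 < #|[set k | c k == true]|)%N -> (0 < #|[set k | c k == false]|)%N ->
  (forall z, eigenvalue Ac z -> complex.Re z < 0) <->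
  [/\ (1 < #|[set k | c k == true]|)%N -> d true - o true true < 0,
      (1 < #|[set k | c k == false]|)%N -> d false - o false false < 0,
      class_rowsum c d o true + class_rowsum c d o false < 0 &
      0 < class_rowsum c d o true * class_rowsum c d o false
          - class_size R c true * class_size R c false * o false true * o true false].
Proof.
move=> neT neF; set T := class_rowsum c d o true + _.
set D := class_rowsum c d o true * _ - _.
split=> [stable|[dT dF sum prod] z].
  have [] := (quadratic_Hurwitz T D).1 => [z|sum prod].
    rewrite -two_class_charpoly_real.
    by move/(charpoly_root_eigenvalue map_two_class neT neF)/stable.
  by split=> // /(eigenvalue_within_class map_two_class)/stable; rewrite -rmorphB.
case/(eigenvalue_two_class map_two_class) => [[b cb ->]|].
  by rewrite -rmorphB; case: b cb => [/dT|/dF].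
rewrite two_class_charpoly_real; move: z.
exact: (quadratic_Hurwitz T D).2.
Qed.
End TwoClassStability.

Lemma constant_offdiag_stable (R : rcfType) n (A : 'M[R]_n) (dd oo : R) :
  (1 < n)%N -> (forall k j, A k j = if k == j then dd else oo) ->
  (forall z, eigenvalue (map_mx (real_complex R) A) z -> complex.Re z < 0)
  <-> dd - oo < 0 /\ dd + (n - 1)%:R * oo < 0.
Proof.
case: n A => [|[|n]] // A _ A_def.
pose c k := k == ord0 :> 'I_n.+2.
have A_cls k j : A k j = if k == j then (fun=> dd) (c k) else (fun _ _ => oo) (c k) (c j).
  exact: A_def.
have cT : [set k : 'I_n.+2 | (k == ord0) == true] = [set ord0].
  by apply/setP => k; rewrite !inE eqb_id.
have cF : [set k : 'I_n.+2 | (k == ord0) == false] = [set~ ord0].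
  by apply/setP => k; rewrite !inE eqbF_neg.
apply: iff_trans (@two_class_stable _ _ c (fun=> dd) (fun _ _ => oo) A A_cls _ _) _.
- by rewrite /c cT cards1.
- by rewrite /c cF cardsC1 card_ord.
rewrite /class_rowsum /class_size /c cT cF cards1 cardsC1 card_ord /= subn1 /=.
have -> : (dd - oo + 1 * oo) * (dd - oo + n.+1%:R * oo) - 1 * n.+1%:R * oo * oo
          = (dd - oo) * (dd + n.+1%:R * oo) by ring.
have -> : dd - oo + 1 * oo + (dd - oo + n.+1%:R * oo)
          = (dd - oo) + (dd + n.+1%:R * oo) by ring.
split=> [[_ _ sum prod]|[neg1 neg2]]; first by split; nra.
by split=> //; nra.
Qed.

Section ColumnPermutations.
Variables (T : eqType) (n : nat).

Lemma count_mem_row (u : 'rV[T]_n) x :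
  count_mem x [tuple u ord0 k | k < n] = #|[set k | u ord0 k == x]|.
Proof.
rewrite /= count_map cardE /enum_mem size_filter count_filter.
by apply: eq_count => k; rewrite !inE andbT.
Qed.

Lemma col_perm_of_counts (r r' : 'rV[T]_n) :
  (forall x, #|[set k | r ord0 k == x]| = #|[set k | r' ord0 k == x]|) ->
  exists s, r = col_perm s r'.
Proof.
move=> cnt.
have /tuple_permP [s e] : perm_eq [tuple r ord0 k | k < n] [tuple r' ord0 k | k < n].
  apply/allP => x _; move: (count_mem_row r x) (count_mem_row r' x).
  by rewrite /= => -> ->; rewrite cnt.
exists s; apply/rowP => k; have := congr1 (nth (r ord0 k) ^~ k) e.
by rewrite -!tnth_nth !tnth_mktuple mxE => ->.
Qed.

Lemma card_ltn_ord i : (i <= n)%N -> #|[set k : 'I_n | (k < i)%N]| = i.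
Proof.
move=> le_in; have widen_inj : injective (widen_ord le_in).
  by move=> a b /(congr1 val) e; apply: val_inj.
rewrite -[RHS]card_ord -(card_imset _ widen_inj).
congr #|pred_of_set _|; apply/setP => k; rewrite inE.
apply/idP/imsetP => [ki|[j _ ->]]; last exact: (ltn_ord j).
by exists (Ordinal ki) => //; apply: val_inj.
Qed.

Variables (p q : T) (i : nat) (r : 'rV[T]_n).
Hypotheses (pq : p != q) (card_p : #|[set k | r ord0 k == p]| = i).
Hypothesis card_q : #|[set k | r ord0 k == q]| = (n - i)%N.

Lemma two_valued_coord k : r ord0 k != p -> r ord0 k = q.
Proof.
have cover : [set k | r ord0 k == p] :|: [set k | r ord0 k == q] = [set: 'I_n].
  apply/eqP; rewrite eqEcard finset.subsetT cardsT card_ord cardsU card_p card_q.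
  rewrite (_ : _ :&: _ = finset.set0) ?cards0; last first.
    apply/setP => k'; rewrite !inE; apply/negP => /andP [/eqP -> /eqP eq_pq].
    by move: pq; rewrite eq_pq eqxx.
  have : (i <= n)%N by rewrite -card_p (leq_trans (max_card _)) ?card_ord.
  lia.
by move=> rkp; apply/eqP; have := finset.in_setT k; rewrite -cover !inE (negPf rkp).
Qed.

Lemma two_valued_col_perm : exists s, r = col_perm s (\row_k if (k < i)%N then p else q).
Proof.
have le_in : (i <= n)%N by rewrite -card_p (leq_trans (max_card _)) ?card_ord.
set rho := (\row_k if (k < i)%N then p else q)%R.
set low := [set k : 'I_n | (k < i)%N].
have rho_p : [set k | rho ord0 k == p] = low.
  by apply/setP => k; rewrite !inE mxE; case: ifP; rewrite ?eqxx // eq_sym (negPf pq).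
have rho_q : [set k | rho ord0 k == q] = ~: low.
  by apply/setP => k; rewrite !inE mxE; case: ifP; rewrite ?eqxx // (negPf pq).
apply: col_perm_of_counts => x.
have [->|xp] := eqVneq x p; first by rewrite rho_p card_ltn_ord.
have [->|xq] := eqVneq x q.
  have := cardsC low; rewrite rho_q card_q card_ltn_ord // card_ord => cC.
  by apply/eqP; rewrite -(eqn_add2l i) subnKC // cC.
have -> : [set k | rho ord0 k == x] = finset.set0.
  apply/setP => k; rewrite !inE mxE.
  by case: ifP => _; [rewrite eq_sym (negPf xp) | rewrite eq_sym (negPf xq)].
have -> : [set k | r ord0 k == x] = finset.set0.
  apply/setP => k; rewrite !inE; have [->|/two_valued_coord ->] := eqVneq (r ord0 k) p.
    by rewrite eq_sym (negPf xp).
  by rewrite eq_sym (negPf xq).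
by [].
Qed.
End ColumnPermutations.

Lemma tperm_invariant_col_perm (T U : Type) n (P : 'rV[T]_n -> U) :
  (forall (i j : 'I_n) (x : 'rV[T]_n), P (\row_k x ord0 (tperm i j k)) = P x) ->
  forall s x, P (col_perm s x) = P x.
Proof.
move=> P_tperm s; have [ts -> _] := prod_tpermP s.
elim: ts => [|t ts IH] x; first by rewrite big_nil col_perm1.
rewrite big_cons col_permM -[RHS]IH -[RHS](P_tperm t.1 t.2).
by congr P; apply/rowP => k; rewrite !mxE.
Qed.

Lemma col_perm_tperm_id (T : Type) n (x : 'rV[T]_n) a b :
  x ord0 a = x ord0 b -> col_perm (tperm a b) x = x.
Proof. by move=> xab; apply/rowP => k; rewrite mxE; case: tpermP => [->|->|]. Qed.

Lemma derive_along_line (R : numFieldType) (V V' W : normedModType R)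
    (f : V -> W) (f' : V' -> W) x x' v v' :
  (forall t : R, f (t *: v + x) = f' (t *: v' + x')) -> 'D_v f x = 'D_v' f' x'.
Proof.
move=> ff'; have fx : f x = f' x' by have := ff' 0; rewrite !scale0r !add0r.
rewrite /derive fx.
suff -> : (fun h : R => h^-1 *: ((f \o shift x) (h *: v) - f' x'))
        = (fun h : R => h^-1 *: ((f' \o shift x') (h *: v') - f' x')) by [].
by apply/funext => t /=; rewrite ff'.
Qed.

Section PartialDerivatives.
Variables (R : realType) (n : nat).

Lemma shift_col_perm (x : 'rV[R]_n) s j (t : R) :
  t *: delta_mx 0 j + col_perm s x = col_perm s (t *: delta_mx 0 (s j) + x).
Proof. by apply/rowP => k; rewrite !mxE (inj_eq perm_inj). Qed.

Lemma pdiff_col_perm (F G : 'rV[R]_n -> R) s x j :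
  (forall y, F (col_perm s y) = G y) -> pdiff F j (col_perm s x) = pdiff G (s j) x.
Proof. by move=> FG; apply: derive_along_line => t; rewrite shift_col_perm FG. Qed.

Lemma pdiff_tperm (F G : 'rV[R]_n -> R) (x : 'rV[R]_n) a b : x ord0 a = x ord0 b ->
  (forall y, F (col_perm (tperm a b) y) = G y) -> pdiff F a x = pdiff G b x.
Proof.
by move=> xab FG; rewrite -{1}(col_perm_tperm_id xab) (pdiff_col_perm _ _ FG) tpermL.
Qed.
End PartialDerivatives.

Section MSRSJacobian.
Variables (R : realType) (n : nat) (l g h : R -> R) (P : 'rV[R]_n -> R) (sigma : R).
Hypothesis msrs : is_MSRS l g h P.
Local Notation F := (msrs_f l g h P sigma).
Local Notation D := (msrs_D l h P).

Lemma msrs_sym s x : P (col_perm s x) = P x.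
Proof. by case: msrs => _ /tperm_invariant_col_perm. Qed.

Lemma msrs_f_col_perm s k x : F k (col_perm s x) = F (s k) x.
Proof. by rewrite /msrs_f msrs_sym mxE. Qed.

Lemma msrs_D_col_perm s k x : D k (col_perm s x) = D (s k) x.
Proof. by rewrite /msrs_D msrs_sym mxE. Qed.

Lemma pdiff_P_eq (x : 'rV[R]_n) a b : x ord0 a = x ord0 b -> pdiff P a x = pdiff P b x.
Proof. by move=> xab; apply: pdiff_tperm xab _ => y; rewrite msrs_sym. Qed.

Lemma pdiff_msrs_f_eq (x : 'rV[R]_n) a b :
  x ord0 a = x ord0 b -> pdiff (F a) a x = pdiff (F b) b x.
Proof. by move=> xab; apply: pdiff_tperm xab _ => y; rewrite msrs_f_col_perm tpermL. Qed.

Lemma msrs_D_eq (x : 'rV[R]_n) a b : x ord0 a = x ord0 b -> D a x = D b x.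
Proof. by rewrite /msrs_D => ->. Qed.

(* Off the diagonal only the denominator P + h(x_k) of f_k varies, and at an
   equilibrium sigma g(x_k) = l(x_k) (P(x) + h(x_k)). *)
Lemma pdiff_msrs_f_offdiag x k j : equilibrium F x -> j != k ->
  pdiff (F k) j x = pdiff P j x / D k x.
Proof.
case: msrs => [[_ [_ [_ dP]]] _ Ph l0 _] [xpos xeq] jk.
set c := h (x ord0 k); have Pc0 : P x + c != 0 by rewrite gt_eqF ?Ph.
have lk : l (x ord0 k) != 0 by apply: l0.
have dPc : derivable (P + cst c) x (delta_mx 0 j).
  by apply: derivableD; [exact: diff_derivable | exact: derivable_cst].
have -> : pdiff (F k) j x = 'D_(delta_mx 0 j)
    (cst (- l (x ord0 k)) + (sigma * g (x ord0 k)) \*: (fun y => (P y + c)^-1)) x.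
  apply: derive_along_line => t /=.
  by rewrite /msrs_f !mxE eqxx eq_sym (negPf jk) mulr0 add0r mulrA.
rewrite deriveD ?derivable_cst //; last exact/derivableZ/derivableV.
rewrite derive_cst add0r deriveZ; last exact: derivableV.
rewrite (@deriveV _ _ (P + cst c)) // deriveD ?derivable_cst //; last exact: diff_derivable.
have eq_k : sigma * g (x ord0 k) = l (x ord0 k) * (P x + c).
  have := xeq k; rewrite /msrs_f -/c => /eqP; rewrite addrC subr_eq0 => /eqP <-.
  by field.
have -> : (P + cst c) x = P x + c by [].
rewrite derive_cst addr0 eq_k /msrs_D /pdiff -/c /GRing.scale /=; field.
by rewrite lk Pc0.
Qed.

Lemma jacobian_col_perm (y : 'rV[R]_n) s k j : equilibrium F (col_perm s y) ->
  Defs.jacobian F (col_perm s y) k j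
  = if k == j then pdiff (F (s k)) (s k) y else pdiff P (s j) y / D (s k) y.
Proof.
move=> eqy; rewrite mxE; case: eqVneq => [<-|kj].
  exact/pdiff_col_perm/msrs_f_col_perm.
rewrite pdiff_msrs_f_offdiag 1?eq_sym //.
by rewrite (pdiff_col_perm _ _ (msrs_sym s)) msrs_D_col_perm.
Qed.

Lemma jacobian_constant (x : 'rV[R]_n) q a b k j : equilibrium F x ->
  (forall k', x ord0 k' = q) ->
  Defs.jacobian F x k j = if k == j then pdiff (F a) a x else pdiff P b x / D a x.
Proof.
move=> eqx xq; rewrite mxE; case: eqVneq => [<-|kj].
  by apply: pdiff_msrs_f_eq; rewrite !xq.
rewrite pdiff_msrs_f_offdiag 1?eq_sym //.
by rewrite (@pdiff_P_eq _ j b) ?(@msrs_D_eq _ k a) ?xq.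
Qed.
End MSRSJacobian.

Lemma lt_le_half (n i : nat) : (0 < i)%N -> (i <= n./2)%N -> (i < n)%N.
Proof. by rewrite geq_half_double; lia. Qed.

Lemma gt1_sub_le_half (n i : nat) : (1 < i)%N -> (i <= n./2)%N -> (1 < n - i)%N.
Proof. by rewrite geq_half_double; lia. Qed.

Section TwoValuedEquilibrium.
Variables (R : realType) (m : nat) (l g h : R -> R) (P : 'rV[R]_m.+2 -> R).
Variables (sigma p q : R) (i : nat) (r : 'rV[R]_m.+2).
Local Notation n := m.+2.
Local Notation F := (msrs_f l g h P sigma).
Local Notation D := (msrs_D l h P).
Hypotheses (msrs : is_MSRS l g h P) (eq_r : equilibrium F r) (pq : p != q).
Hypotheses (i_gt0 : (1 <= i)%N) (i_half : (i <= n./2)%N).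
Hypotheses (card_p : #|[set k | r ord0 k == p]| = i).
Hypothesis (card_q : #|[set k | r ord0 k == q]| = (n - i)%N).

Local Notation rho := (\row_k (if (k < i)%N then p else q) : 'rV[R]_n).
Local Notation beta := (pdiff (F ord0) ord0 rho).
Local Notation tau := (pdiff (F ord_max) ord_max rho).
Local Notation gamma := (pdiff P (inord 1) rho / D ord0 rho).
Local Notation xi := (pdiff P (inord m) rho / D ord_max rho).
Local Notation mu := (pdiff P ord_max rho / D ord0 rho).
Local Notation nu := (pdiff P ord0 rho / D ord_max rho).

Let cls k := r ord0 k == p.
Let diag_entry b := if b then beta else tau.
Let offdiag_entry b b' :=
  if b then (if b' then gamma else mu) else (if b' then nu else xi).

Lemma i_lt_n : (i < n)%N.
Proof. exact: lt_le_half i_gt0 i_half. Qed.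

Lemma jacobian_two_valued k j : Defs.jacobian F r k j
  = if k == j then diag_entry (cls k) else offdiag_entry (cls k) (cls j).
Proof.
have [s r_s] := two_valued_col_perm pq card_p card_q.
have r_q := two_valued_coord pq card_p card_q.
have r_rho k' : r ord0 k' = rho ord0 (s k') by rewrite r_s !mxE.
have rho_s k' : rho ord0 (s k') = rho ord0 (if cls k' then ord0 else ord_max).
  rewrite -r_rho [RHS]mxE /cls.
  case: eqVneq => [->|/r_q ->] /=; first by rewrite i_gt0.
  by rewrite ltnNge -ltnS i_lt_n.
have eq_rho : equilibrium F (col_perm s rho) by rewrite -r_s.
rewrite r_s (jacobian_col_perm msrs k j eq_rho).
case: (eqVneq k j) => [_|kj].
  by rewrite (pdiff_msrs_f_eq _ msrs (rho_s k)) /diag_entry; case: (cls k).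
rewrite (pdiff_P_eq msrs (rho_s j)) (msrs_D_eq _ _ _ (rho_s k)) /offdiag_entry.
case ck: (cls k); case cj: (cls j) => //.
- have i_gt1 : (1 < i)%N.
    rewrite -card_p; apply/card_gt1P; exists k, j; rewrite !inE.
    by move: ck cj; rewrite /cls => -> ->.
  suff -> : pdiff P ord0 rho = pdiff P (inord 1) rho by [].
  by apply: (pdiff_P_eq msrs); rewrite !mxE inordK // i_gt0 i_gt1.
- have i_le_m : (i <= m)%N.
    suff : (1 < n - i)%N by lia.
    rewrite -card_q; apply/card_gt1P; exists k, j; rewrite !inE.
    by move: ck cj; rewrite /cls => /negbT/r_q -> /negbT/r_q ->.
  suff -> : pdiff P ord_max rho = pdiff P (inord m) rho by [].
  apply: (pdiff_P_eq msrs); rewrite !mxE inordK //.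
  by rewrite !ltnNge i_le_m /= -ltnS ltnW // i_lt_n.
Qed.

Lemma stable_two_valued :
  stable_eq F r <->
  [/\ (1 < i)%N -> beta - gamma < 0, (1 < n - i)%N -> tau - xi < 0,
      beta + tau + (i - 1)%:R * gamma + (n - i - 1)%:R * xi < 0 &
      0 < (beta + (i - 1)%:R * gamma) * (tau + (n - i - 1)%:R * xi)
          - (i * (n - i))%:R * mu * nu].
Proof.
have card_T : #|[set k | cls k == true]| = i.
  by rewrite -card_p; apply: eq_card => k; rewrite !inE eqb_id.
have card_F : #|[set k | cls k == false]| = (n - i)%N.
  rewrite -card_q; apply: eq_card => k; rewrite !inE eqbF_neg /cls.
  by case: eqVneq => [->|/(two_valued_coord pq card_p card_q) ->]; rewrite ?eqxx ?(negPf pq).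
have i_le_n := ltnW i_lt_n.
apply: iff_trans (@two_class_stable _ _ cls diag_entry offdiag_entry _ jacobian_two_valued _ _) _.
- by rewrite card_T.
- by rewrite card_F subn_gt0 i_lt_n.
rewrite /class_rowsum /class_size card_T card_F /diag_entry /offdiag_entry /=.
rewrite natrM !natrB ?subn_gt0 ?i_lt_n //.
have -> : (beta - gamma + i%:R * gamma + (tau - xi + (n%:R - i%:R) * xi)
    = beta + tau + (i%:R - 1) * gamma + (n%:R - i%:R - 1) * xi) by ring.
have -> : (beta - gamma + i%:R * gamma) * (tau - xi + (n%:R - i%:R) * xi)
    - i%:R * (n%:R - i%:R) * nu * mu
    = (beta + (i%:R - 1) * gamma) * (tau + (n%:R - i%:R - 1) * xi)
    - i%:R * (n%:R - i%:R) * mu * nu by ring.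
by [].
Qed.
End TwoValuedEquilibrium.

Theorem corollary1 (R : realType) (m : nat) (l g h : R -> R)
  (P : 'rV[R]_(m.+2) -> R) (sigma : R) (r : 'rV[R]_(m.+2)) :
  is_MSRS l g h P -> 0 < sigma ->
  equilibrium (msrs_f l g h P sigma) r ->
  let F := msrs_f l g h P sigma in
  let n := m.+2 in
  (forall q : R, (forall k, r ord0 k = q) ->
     let tau := pdiff (F ord_max) ord_max r in
     let xi := pdiff P (inord m) r / msrs_D l h P ord_max r in
     let G1 := tau - xi in
     let G2 := tau + (n - 1)%:R * xi in
     stable_eq F r <-> (G1 < 0 /\ G2 < 0))
  /\
  (forall (p q : R) (i : nat), p != q -> (1 <= i)%N -> (i <= n./2)%N ->
     #|[set k | r ord0 k == p]| = i -> #|[set k | r ord0 k == q]| = (n - i)%N ->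
     let rho : 'rV[R]_n := \row_k (if (k < i)%N then p else q) in
     let beta := pdiff (F ord0) ord0 rho in
     let tau := pdiff (F ord_max) ord_max rho in
     let gamma := pdiff P (inord 1) rho / msrs_D l h P ord0 rho in
     let xi := pdiff P (inord m) rho / msrs_D l h P ord_max rho in
     let mu := pdiff P ord_max rho / msrs_D l h P ord0 rho in
     let nu := pdiff P ord0 rho / msrs_D l h P ord_max rho in
     let G1 := tau - xi in
     let G2 := beta - gamma in
     let G3 := beta + tau + (i - 1)%:R * gamma + (n - i - 1)%:R * xi in
     let G4 := (beta + (i - 1)%:R * gamma) * (tau + (n - i - 1)%:R * xi)
               - (i * (n - i))%:R * mu * nu in
     [/\ (i = 1%N -> n = 2%N -> (stable_eq F r <-> (G3 < 0 /\ 0 < G4))),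
         (i = 1%N -> (2 < n)%N -> (stable_eq F r <-> [/\ G1 < 0, G3 < 0 & 0 < G4])) &
         ((2 <= i)%N -> (stable_eq F r <-> [/\ G1 < 0, G2 < 0, G3 < 0 & 0 < G4]))]).
Proof.
move=> msrs _ eq_r F n; split.
  move=> q r_q tau xi G1 G2; apply: constant_offdiag_stable => // k j.
  exact: (jacobian_constant msrs ord_max (inord m) k j eq_r r_q).
move=> p q i pq i_gt0 i_half card_p card_q rho beta tau gamma xi mu nu G1 G2 G3 G4.
have stable := stable_two_valued msrs eq_r pq i_gt0 i_half card_p card_q.
split=> [i1 n2 | i1 n_gt2 | i_ge2]; apply: iff_trans stable _.
- by split=> [[_ _ ? ?] | [? ?]] //; split=> // lt; exfalso; lia.
- split=> [[_ G1neg ? ?] | [? ? ?]]; first by split=> //; apply: G1neg; lia.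
  by split=> // lt; exfalso; lia.
- split=> [[G2neg G1neg ? ?] | [? ? ? ?]]; last by split.
  by split=> //; [apply/G1neg/(gt1_sub_le_half i_ge2 i_half) | exact: G2neg].
Qed.
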